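(* Let $D=\sum_{m=-\infty}^{M}\sum_{k=-\infty}^{K}C_{km}x^k(d/dx)^m\in\Psi\mathfrak D$ with $C_{KM}\ne0$. Then $D$ is invertible in $\Psi\mathfrak D$.
   Context: $\Psi\mathfrak D$ is the algebra of all formal series $\sum_{m=-\infty}^{M}\sum_{k=-\infty}^{K}C_{km}x^k(d/dx)^m$ with $C_{km}\in\mathbb C$ and integers $M,K$ depending on the series, with multiplication determined by $(d/dx)^m x^k=\sum_{j\ge0}\frac{(m)_j(k)_j}{j!}x^{k-j}(d/dx)^{m-j}$ for $m,k\in\mathbb Z$, where $(a)_j=a(a-1)\cdots(a-j+1)$. *)

From mathcomp Require Import all_boot all_algebra.
From mathcomp Require Import complex reals.
From mathcomp Require Import order ssralg ssrnum.
Set Implicit Arguments. Unset Strict Implicit. Unset Printing Implicit Defensive.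
Import Order.TTheory GRing.Theory Num.Theory.
Local Open Scope ring_scope.

Section PsiD.
Variable F : fieldType.

(* An element of ΨD is given by its coefficient function (k, m) |-> C_{km}
   (coefficient of x^k (d/dx)^m), whose support lies in {k <= K, m <= M}. *)
Definition psi_bounded (C : int -> int -> F) (K M : int) : Prop :=
  forall k m : int, (K < k) || (M < m) -> C k m = 0.

Definition zsum (lo hi : int) (f : int -> F) : F :=
  if lo <= hi then \sum_(i < (absz (hi - lo)).+1) f (lo + (i : nat)%:Z) else 0.

Definition ffz (a : int) (j : nat) : F := \prod_(i < j) (a - (i : nat)%:Z)%:~R.

(* Coefficient of x^k (d/dx)^m in the product A * B, where A is supported in
   {k <= K1, m <= M1} and B in {k <= K2, m <= M2}, using
   (x^a D^b)(x^c D^d) = sum_{j>=0} (b)_j (c)_j / j! x^(a+c-j) D^(b+d-j).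
   Terms contribute only when a <= K1, c = k+j-a <= K2, b <= M1,
   d = m+j-b <= M2, j >= 0, so the sum below is the full (finite) sum. *)
Definition psi_mul (A B : int -> int -> F) (K1 M1 K2 M2 : int)
  (k m : int) : F :=
  zsum 0 (K1 + K2 - k) (fun j =>
    zsum (k + j - K2) K1 (fun a =>
      zsum (m + j - M2) M1 (fun b =>
        A a b * B (k + j - a) (m + j - b)
          * (ffz b (absz j) * ffz (k + j - a) (absz j) / ((absz j)`!)%:R)))).

Definition psi_one (k m : int) : F := if (k == 0) && (m == 0) then 1 else 0.

Definition psi_invertible (D : int -> int -> F) (K M : int) : Prop :=
  exists (E : int -> int -> F) (K' M' : int),
    psi_bounded E K' M' /\
    (forall k m, psi_mul D E K M K' M' k m = psi_one k m) /\
    (forall k m, psi_mul E D K' M' K M k m = psi_one k m).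

End PsiD.

From mathcomp Require Import all_boot all_algebra.
From mathcomp Require Import complex reals.
From mathcomp Require Import order ssralg ssrnum.
From mathcomp Require Import zify ring.
Set Implicit Arguments. Unset Strict Implicit. Unset Printing Implicit Defensive.
Import Order.TTheory GRing.Theory Num.Theory.
Local Open Scope ring_scope.

(* The coefficient of x^(p+K) (d/dx)^(q+M) in D E is C_KM E_pq plus terms
   involving only coefficients E_p'q' with p' >= p, q' >= q, (p', q') <> (p, q).
   So D E = 1, for E supported in {p <= -K, q <= -M}, is a triangular system
   that can be solved by recursion on (-K - p) + (-M - q): only finitely many
   points of that support lie above a given one.  Likewise E' D = 1 has a
   solution E'.  Multiplication is associative (on coefficients this is a
   Chu-Vandermonde identity for falling factorials), hence
   E' = E' (D E) = (E' D) E = E. *)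

Section IntegerRangeSums.
Variable F : fieldType.
Implicit Types (f g : int -> F) (lo hi : int).

Definition zrange lo hi : seq int :=
  if lo <= hi then [seq lo + (i : nat)%:Z | i <- iota 0 (absz (hi - lo)).+1]
  else [::].

Lemma zsumE lo hi f : zsum lo hi f = \sum_(x <- zrange lo hi) f x.
Proof.
rewrite /zsum /zrange; case: ifP => _; last by rewrite big_nil.
by rewrite big_map -(subn0 (absz _).+1) -/(index_iota _ _) big_mkord.
Qed.

Lemma mem_zrange lo hi x : (x \in zrange lo hi) = (lo <= x <= hi).
Proof.
rewrite /zrange; case: ifP => h.
  apply/mapP/idP => [ [n] | hx]; first by rewrite mem_iota => /andP[_ ?] ->; lia.
  by exists (absz (x - lo)); rewrite ?mem_iota; lia.
by rewrite in_nil; symmetry; apply/negbTE/negP => /andP[]; lia.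
Qed.

Lemma zrange_uniq lo hi : uniq (zrange lo hi).
Proof.
rewrite /zrange; case: ifP => // _.
by rewrite map_inj_uniq ?iota_uniq // => i j; lia.
Qed.

Lemma eq_big_uniq_supp (r1 r2 : seq int) f g : uniq r1 -> uniq r2 ->
  (forall x, x \in r1 -> x \in r2 -> f x = g x) ->
  (forall x, x \in r1 -> x \notin r2 -> f x = 0) ->
  (forall x, x \in r2 -> x \notin r1 -> g x = 0) ->
  \sum_(x <- r1) f x = \sum_(x <- r2) g x.
Proof.
move=> u1 u2 fg f0 g0.
have restrict (r r' : seq int) (h : int -> F) : (forall x, x \in r -> x \notin r' -> h x = 0) ->
    \sum_(x <- r) h x = \sum_(x <- [seq x <- r | x \in r']) h x.
  move=> h0; rewrite big_filter [RHS]big_mkcond; apply: eq_big_seq => x xr.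
  by case: ifP => // /negbT /(h0 _ xr) ->.
rewrite (restrict _ r2 _ f0) (restrict _ r1 _ g0) (perm_big [seq x <- r2 | x \in r1]).
  by apply: eq_big_seq => x; rewrite mem_filter => /andP[? ?]; apply: fg.
by apply: uniq_perm; rewrite ?filter_uniq // => x; rewrite !mem_filter andbC.
Qed.

Lemma eq_zsum_supp lo1 hi1 lo2 hi2 f g :
  (forall x, lo1 <= x <= hi1 -> lo2 <= x <= hi2 -> f x = g x) ->
  (forall x, lo1 <= x <= hi1 -> ~~ (lo2 <= x <= hi2) -> f x = 0) ->
  (forall x, lo2 <= x <= hi2 -> ~~ (lo1 <= x <= hi1) -> g x = 0) ->
  zsum lo1 hi1 f = zsum lo2 hi2 g.
Proof.
move=> fg f0 g0; rewrite !zsumE.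
by apply: eq_big_uniq_supp; rewrite ?zrange_uniq // => x; rewrite !mem_zrange; auto.
Qed.

Lemma eq_zsum_in lo hi f g : (forall x, lo <= x <= hi -> f x = g x) ->
  zsum lo hi f = zsum lo hi g.
Proof.
by move=> fg; apply: eq_zsum_supp => [x /fg -> //|x ? /negP[]|x ? /negP[]].
Qed.

Lemma eq_zsum lo hi f g : f =1 g -> zsum lo hi f = zsum lo hi g.
Proof. by move=> fg; apply: eq_zsum_in => x _. Qed.

Lemma zsum_eq0 lo hi f : (forall x, lo <= x <= hi -> f x = 0) -> zsum lo hi f = 0.
Proof. by move=> f0; rewrite zsumE big1_seq // => x /andP[_]; rewrite mem_zrange; apply: f0. Qed.

Lemma zsum_single lo hi f x0 : lo <= x0 <= hi ->
  (forall x, lo <= x <= hi -> x != x0 -> f x = 0) -> zsum lo hi f = f x0.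
Proof.
move=> hx0 f0; rewrite zsumE (bigD1_seq x0) ?mem_zrange ?zrange_uniq //=.
by rewrite big1_seq ?addr0 // => x /andP[? ]; rewrite mem_zrange => /f0; apply.
Qed.

Lemma exchange_zsum lo1 hi1 lo2 hi2 (f : int -> int -> F) :
  zsum lo1 hi1 (fun x => zsum lo2 hi2 (f x)) =
  zsum lo2 hi2 (fun y => zsum lo1 hi1 (fun x => f x y)).
Proof.
rewrite zsumE (eq_bigr _ (fun x _ => zsumE _ _ _)) exchange_big zsumE.
by apply: eq_bigr => y _; rewrite zsumE.
Qed.

Lemma zsumB lo hi f g : zsum lo hi (fun x => f x - g x) = zsum lo hi f - zsum lo hi g.
Proof. by rewrite !zsumE sumrB. Qed.

Lemma mulr_zsuml lo hi f c : zsum lo hi f * c = zsum lo hi (fun x => f x * c).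
Proof. by rewrite !zsumE mulr_suml. Qed.

Lemma mulr_zsumr lo hi f c : c * zsum lo hi f = zsum lo hi (fun x => c * f x).
Proof. by rewrite !zsumE mulr_sumr. Qed.

Lemma zsum_nat (n : nat) f : zsum 0 n f = \sum_(i < n.+1) f i.
Proof. by rewrite /zsum le0z_nat subr0; apply: eq_bigr => i _; rewrite add0r. Qed.

Lemma reindex_zsum lo hi (g h : int -> int) f : cancel g h -> cancel h g ->
  (forall x, lo <= x <= hi -> ~~ (lo <= h x <= hi) -> f x = 0) ->
  (forall x, ~~ (lo <= x <= hi) -> lo <= h x <= hi -> f x = 0) ->
  zsum lo hi f = zsum lo hi (fun y => f (g y)).
Proof.
move=> gK hK f0 f0'; rewrite !zsumE -(big_map g predT f).
have g_inj : injective g := can_inj gK.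
have mem_g x : (x \in map g (zrange lo hi)) = (lo <= h x <= hi).
  by rewrite -{1}(hK x) mem_map // mem_zrange.
apply: eq_big_uniq_supp; rewrite ?zrange_uniq ?map_inj_uniq ?zrange_uniq //.
- by move=> x; rewrite mem_zrange mem_g; auto.
- by move=> x; rewrite mem_g mem_zrange => ? ?; apply: f0'.
Qed.

Lemma zsum_shift lo hi t f :
  (forall x, lo <= x <= hi -> ~~ (lo <= x + t <= hi) -> f x = 0) ->
  (forall x, ~~ (lo <= x <= hi) -> lo <= x + t <= hi -> f x = 0) ->
  zsum lo hi f = zsum lo hi (fun y => f (y - t)).
Proof. by apply: reindex_zsum => y; rewrite ?subrK ?addrK. Qed.

Lemma zsum_reflect lo hi t f :
  (forall x, lo <= x <= hi -> ~~ (lo <= t - x <= hi) -> f x = 0) ->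
  (forall x, ~~ (lo <= x <= hi) -> lo <= t - x <= hi -> f x = 0) ->
  zsum lo hi f = zsum lo hi (fun y => f (t - y)).
Proof. by apply: reindex_zsum => y; rewrite opprB addrC subrK. Qed.

Lemma exchange_zsum6l (L H N : int) (Y : int -> int -> int -> int -> int -> int -> F) :
  zsum 0 N (fun i => zsum L H (fun c => zsum L H (fun d =>
    zsum 0 N (fun j => zsum L H (fun a => zsum L H (fun b => Y i c d j a b)))))) =
  zsum L H (fun a => zsum L H (fun b => zsum L H (fun c => zsum L H (fun d =>
    zsum 0 N (fun i => zsum 0 N (fun j => Y i c d j a b)))))).
Proof.
under eq_zsum => i do under eq_zsum => c do under eq_zsum => d do rewrite exchange_zsum.
under eq_zsum => i do under eq_zsum => c do under eq_zsum => d do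
  under eq_zsum => a do rewrite exchange_zsum.
rewrite exchange_zsum.
under eq_zsum => c do rewrite exchange_zsum.
under eq_zsum => c do under eq_zsum => d do rewrite exchange_zsum.
under eq_zsum => c do under eq_zsum => d do under eq_zsum => a do rewrite exchange_zsum.
under eq_zsum => c do rewrite exchange_zsum.
under eq_zsum => c do under eq_zsum => a do rewrite exchange_zsum.
rewrite exchange_zsum.
by under eq_zsum => a do rewrite exchange_zsum.
Qed.

Lemma exchange_zsum6r (L H N : int) (Y : int -> int -> int -> int -> int -> int -> F) :
  zsum 0 N (fun i => zsum L H (fun a => zsum L H (fun b =>
    zsum 0 N (fun j => zsum L H (fun c => zsum L H (fun d => Y i a b j c d)))))) =
  zsum L H (fun a => zsum L H (fun b => zsum L H (fun c => zsum L H (fun d =>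
    zsum 0 N (fun i => zsum 0 N (fun j => Y i a b j c d)))))).
Proof.
under eq_zsum => i do under eq_zsum => a do under eq_zsum => b do rewrite exchange_zsum.
under eq_zsum => i do under eq_zsum => a do under eq_zsum => b do
  under eq_zsum => c do rewrite exchange_zsum.
rewrite exchange_zsum.
under eq_zsum => a do rewrite exchange_zsum.
under eq_zsum => a do under eq_zsum => b do rewrite exchange_zsum.
by under eq_zsum => a do under eq_zsum => b do under eq_zsum => c do rewrite exchange_zsum.
Qed.

Lemma zsum_antidiagonal N (G : int -> F) (X : int -> int -> F) : 0 <= N ->
  (forall s, N < s -> G s = 0) ->
  zsum 0 N (fun i => zsum 0 N (fun j => G (i + j) * X i j)) =
  zsum 0 N (fun s => G s * zsum 0 s (fun i => X i (s - i))).
Proof.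
move=> N_ge0 G0.
transitivity (zsum 0 N (fun i => zsum 0 N (fun s =>
    if i <= s then G s * X i (s - i) else 0))).
  apply: eq_zsum_in => i i_range.
  transitivity (zsum 0 N (fun j => if 0 <= j then G (i + j) * X i j else 0)).
    by apply: eq_zsum_in => j j_range; rewrite ifT //; lia.
  rewrite (zsum_shift (t := i)) => [|j ? ?|j ? ?]; first last.
  - by rewrite ifF //; apply/negbTE; lia.
  - by case: ifP => // _; rewrite G0 ?mul0r //; lia.
  by apply: eq_zsum => s; rewrite subr_ge0; case: ifP => // _; rewrite addrC subrK.
rewrite exchange_zsum; apply: eq_zsum_in => s s_range.
rewrite mulr_zsumr; apply: eq_zsum_supp => [i ? ?|i ? ?|i ? /negP[]]; last by lia.
- by rewrite ifT //; lia.
- by rewrite ifF //; apply/negbTE; lia.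
Qed.


End IntegerRangeSums.

Section FallingFactorials.
Variable F : fieldType.
Local Notation ffz := (@ffz F).

Lemma ffzn0 a : ffz a 0 = 1.
Proof. by rewrite /ffz big_ord0. Qed.

Lemma ffznS a n : ffz a n.+1 = ffz a n * (a - n%:Z)%:~R.
Proof. by rewrite /ffz big_ord_recr. Qed.

Lemma ffz0n n : ffz 0 n = (n == 0)%:R.
Proof. by case: n => [|n]; rewrite ?ffzn0 // /ffz big_ord_recl /= subrr mul0r. Qed.

Lemma ffzD a i j : ffz a (i + j) = ffz a i * ffz (a - i%:Z) j.
Proof.
rewrite /ffz big_split_ord /=; congr (_ * _); apply: eq_bigr => l _.
by congr (_ %:~R); rewrite /= PoszD opprD addrA.
Qed.

Lemma ffzDn x y n :
  ffz (x + y) n = \sum_(l < n.+1) 'C(n, l)%:R * ffz x l * ffz y (n - l).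
Proof.
elim: n => [|n IHn]; first by rewrite big_ord1 /= !ffzn0 bin0 !mulr1.
have split_factor (i : 'I_n.+1) :
    'C(n, i)%:R * ffz x i * ffz y (n - i) * (x + y - n%:Z)%:~R
  = 'C(n, i)%:R * ffz x i.+1 * ffz y (n - i)
    + 'C(n, i)%:R * ffz x i * ffz y (n - i).+1.
  have le_in : (i <= n)%N by rewrite -ltnS.
  have -> : (x + y - n%:Z)%:~R = (x - i%:Z)%:~R + (y - (n - i)%N%:Z)%:~R :> F.
    by rewrite -intrD; congr (_ %:~R); lia.
  by rewrite !ffznS; ring.
rewrite ffznS IHn mulr_suml (eq_bigr _ (fun i _ => split_factor i)) big_split /=.
rewrite [RHS]big_ord_recl /=.
have -> : \sum_(i < n.+1) 'C(n.+1, bump 0 i)%:R * ffz x (bump 0 i) * ffz y (n.+1 - bump 0 i)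
  = \sum_(i < n.+1) 'C(n, i.+1)%:R * ffz x i.+1 * ffz y (n - i) +
    \sum_(i < n.+1) 'C(n, i)%:R * ffz x i.+1 * ffz y (n - i).
  by rewrite -big_split; apply: eq_bigr => i _; rewrite /bump /= binS natrD subSS; ring.
rewrite [LHS]addrC [RHS]addrA; congr (_ + _).
rewrite big_ord_recl [X in _ = _ + X]big_ord_recr /= (@bin_small n n.+1) //.
rewrite !mul0r addr0 !bin0 !subn0.
by congr (_ + _); apply: eq_bigr => i _; rewrite /bump /= subnSK.
Qed.

End FallingFactorials.

Section CommutationCoefficients.
Variable F : fieldType.
Local Notation ffz := (@ffz F).

(* The coefficient of [x^(c-j) (d/dx)^(b-j)] in [(d/dx)^b x^c], as in [psi_mul]. *)
Definition commute_coef (b c j : int) : F :=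
  ffz b (absz j) * ffz c (absz j) / ((absz j)`!)%:R.

Lemma commute_coef0 b c : commute_coef b c 0 = 1.
Proof. by rewrite /commute_coef /= !ffzn0 mulr1 divr1. Qed.

Lemma commute_coef0l c j : j != 0 -> commute_coef 0 c j = 0.
Proof. by rewrite /commute_coef ffz0n -absz_eq0 => /negPf ->; rewrite !mul0r. Qed.

Lemma commute_coef0r b j : j != 0 -> commute_coef b 0 j = 0.
Proof. by rewrite /commute_coef ffz0n -absz_eq0 => /negPf ->; rewrite mulr0 mul0r. Qed.

Hypothesis F_char0 : has_pchar0 F.

Lemma natf_eq0 n : (n%:R == 0 :> F) = (n == 0).
Proof. exact: (pcharf0P F).1. Qed.

Definition triple_coef (b c d e : int) (P Q R : nat) : F :=
  ffz b (P + R) * ffz c P * ffz d Q * ffz e (Q + R) /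
  (P`!%:R * Q`!%:R * R`!%:R).

Lemma commute_coef_expandl b c d e (j i : nat) :
  commute_coef b c j * commute_coef (b + d - j%:Z) e i =
  \sum_(l < i.+1) triple_coef b c d e j (i - l) l.
Proof.
rewrite /commute_coef /= (_ : b + d - j%:Z = (b - j%:Z) + d); last by ring.
rewrite ffzDn !mulr_suml mulr_sumr; apply: eq_bigr => l _.
have le_li : (l <= i)%N by rewrite -ltnS.
rewrite /triple_coef ffzD (subnK le_li) -(bin_fact le_li) !natrM.
by field; rewrite !natf_eq0 -!lt0n !fact_gt0 bin_gt0 le_li.
Qed.

Lemma commute_coef_expandr b c d e (j i : nat) :
  commute_coef b (c + e - j%:Z) i * commute_coef d e j =
  \sum_(l < i.+1) triple_coef b c d e (i - l) j l.
Proof.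
rewrite /commute_coef /= (_ : c + e - j%:Z = (e - j%:Z) + c); last by ring.
rewrite ffzDn mulr_sumr !mulr_suml; apply: eq_bigr => l _.
have le_li : (l <= i)%N by rewrite -ltnS.
rewrite /triple_coef (subnK le_li) ffzD -(bin_fact le_li) !natrM.
by field; rewrite !natf_eq0 -!lt0n !fact_gt0 bin_gt0 le_li.
Qed.

Lemma triangular_exchange n (G : nat -> nat -> F) :
  \sum_(i < n.+1) \sum_(l < i.+1) G i l =
  \sum_(l < n.+1) \sum_(l <= i < n.+1) G i l.
Proof.
rewrite (eq_bigr (fun i : 'I_n.+1 => \sum_(l < n.+1 | (l < i.+1)%N) G i l)); last first.
  by move=> i _; rewrite (big_ord_widen n.+1 (G i)) // ltnS -ltnS.
rewrite (exchange_big_dep predT) //=; apply: eq_bigr => l _.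
by rewrite big_geq_mkord; apply: eq_bigl => i /=; rewrite ltnS.
Qed.

Lemma commute_coef_assoc b c d e (n : nat) :
  zsum 0 n (fun i => commute_coef b c (n%:Z - i) * commute_coef (b + d - (n%:Z - i)) e i) =
  zsum 0 n (fun i => commute_coef b (c + e - (n%:Z - i)) i * commute_coef d e (n%:Z - i)).
Proof.
have subn_int (i : 'I_n.+1) : n%:Z - i%:Z = (n - i)%N by rewrite subzn // -ltnS.
rewrite !zsum_nat; under eq_bigr => i _ do rewrite subn_int commute_coef_expandl.
under [RHS]eq_bigr => i _ do rewrite subn_int commute_coef_expandr.
rewrite (triangular_exchange n (fun i l => triple_coef b c d e (n - i) (i - l) l)).
rewrite (triangular_exchange n (fun i l => triple_coef b c d e (i - l) (n - i) l)).
apply: eq_bigr => l _; rewrite big_nat_rev /=; apply: eq_big_nat => i /andP[? ?].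
by congr triple_coef; lia.
Qed.

End CommutationCoefficients.

Arguments commute_coef {F}.

Section ProductWindow.
Variable F : fieldType.
Implicit Types A B : int -> int -> F.

Lemma psi_bounded_eq0 A K M k m : psi_bounded A K M -> ~~ ((k <= K) && (m <= M)) -> A k m = 0.
Proof. by rewrite negb_and -!ltNge => hA /hA. Qed.

Lemma mul_bounded_eq0 A B K1 M1 K2 M2 a b c d w :
  psi_bounded A K1 M1 -> psi_bounded B K2 M2 ->
  ~~ [&& a <= K1, b <= M1, c <= K2 & d <= M2] -> A a b * B c d * w = 0.
Proof.
move=> hA hB; have [/andP[a_le b_le]|/(psi_bounded_eq0 hA) ->] := boolP ((a <= K1) && (b <= M1)).
  by rewrite a_le b_le /= => /(psi_bounded_eq0 hB) ->; rewrite mulr0 mul0r.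
by rewrite !mul0r.
Qed.

Lemma psi_mul_window A B K1 M1 K2 M2 k m N :
  psi_bounded A K1 M1 -> psi_bounded B K2 M2 -> 0 <= N ->
  K1 + K2 - k <= N -> -N <= k - K2 -> K1 <= N -> -N <= m - M2 -> M1 <= N ->
  psi_mul A B K1 M1 K2 M2 k m =
  zsum 0 N (fun j => zsum (-N) N (fun a => zsum (-N) N (fun b =>
    A a b * B (k + j - a) (m + j - b) * commute_coef b (k + j - a) j))).
Proof.
move=> hA hB *; rewrite /psi_mul; apply: eq_zsum_supp => [j hj _||j hj hj'].
- apply: eq_zsum_supp => [a _ _||a ha ha'].
  + apply: eq_zsum_supp => // [b hb /negP[]|b hb hb']; first lia.
    by rewrite (mul_bounded_eq0 _ hA hB) //; lia.
  + by move=> a ha /negP[]; lia.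
  + by apply: zsum_eq0 => b hb; rewrite (mul_bounded_eq0 _ hA hB) //; lia.
- by move=> j hj /negP[]; lia.
- by apply: zsum_eq0 => a ha; apply: zsum_eq0 => b hb; rewrite (mul_bounded_eq0 _ hA hB) //; lia.
Qed.

Lemma psi_mul_windowr A B K1 M1 K2 M2 k m N :
  psi_bounded A K1 M1 -> psi_bounded B K2 M2 -> 0 <= N ->
  K1 + K2 - k <= N -> -N <= k - K2 -> K1 <= N -> -N <= m - M2 -> M1 <= N ->
  -N <= k - K1 -> K2 <= N -> -N <= m - M1 -> M2 <= N ->
  psi_mul A B K1 M1 K2 M2 k m =
  zsum 0 N (fun j => zsum (-N) N (fun c => zsum (-N) N (fun d =>
    A (k + j - c) (m + j - d) * B c d * commute_coef (m + j - d) c j))).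
Proof.
move=> hA hB *; rewrite (psi_mul_window (N := N) hA hB) //; apply: eq_zsum_in => j hj.
rewrite (@zsum_reflect _ _ _ (k + j)) => [|a ? ?|a ? ?]; first last.
- by apply: zsum_eq0 => b ?; rewrite (mul_bounded_eq0 _ hA hB) //; lia.
- by apply: zsum_eq0 => b ?; rewrite (mul_bounded_eq0 _ hA hB) //; lia.
apply: eq_zsum => c; rewrite (@zsum_reflect _ _ _ (m + j)) => [|b ? ?|b ? ?]; first last.
- by rewrite (mul_bounded_eq0 _ hA hB) //; lia.
- by rewrite (mul_bounded_eq0 _ hA hB) //; lia.
by apply: eq_zsum => d; rewrite !subKr.
Qed.

End ProductWindow.

Section ProductLaws.
Variable F : fieldType.
Implicit Types A B D E G : int -> int -> F.
Local Notation one := (@psi_one F).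

Lemma psi_mul_bounded A B K1 M1 K2 M2 :
  psi_bounded (psi_mul A B K1 M1 K2 M2) (K1 + K2) (M1 + M2).
Proof.
move=> k m /orP[hk|hm]; first by rewrite /psi_mul /zsum ifF //; apply/negbTE; lia.
apply: zsum_eq0 => j hj; apply: zsum_eq0 => a ha.
by rewrite /zsum ifF //; apply/negbTE; lia.
Qed.

Lemma eq_psi_mul A A' B B' K1 M1 K2 M2 k m : A =2 A' -> B =2 B' ->
  psi_mul A B K1 M1 K2 M2 k m = psi_mul A' B' K1 M1 K2 M2 k m.
Proof.
move=> eqA eqB; apply: eq_zsum => j; apply: eq_zsum => a.
by apply: eq_zsum => b; rewrite eqA eqB.
Qed.

Lemma psi_mulBr A B1 B2 K1 M1 K2 M2 k m :
  psi_mul A (fun x y => B1 x y - B2 x y) K1 M1 K2 M2 k m =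
  psi_mul A B1 K1 M1 K2 M2 k m - psi_mul A B2 K1 M1 K2 M2 k m.
Proof.
rewrite -zsumB; apply: eq_zsum => j; rewrite -zsumB; apply: eq_zsum => a.
by rewrite -zsumB; apply: eq_zsum => b; ring.
Qed.

Lemma psi_mulBl A1 A2 B K1 M1 K2 M2 k m :
  psi_mul (fun x y => A1 x y - A2 x y) B K1 M1 K2 M2 k m =
  psi_mul A1 B K1 M1 K2 M2 k m - psi_mul A2 B K1 M1 K2 M2 k m.
Proof.
rewrite -zsumB; apply: eq_zsum => j; rewrite -zsumB; apply: eq_zsum => a.
by rewrite -zsumB; apply: eq_zsum => b; ring.
Qed.

Lemma psi_one_bounded : psi_bounded one 0 0.
Proof. by move=> k m h; rewrite /psi_one; case: ifP => // /andP[/eqP hk /eqP hm]; lia. Qed.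

Lemma psi_one_eq0 k m : (k != 0) || (m != 0) -> one k m = 0.
Proof. by move=> h; rewrite /psi_one ifF //; apply/negbTE; rewrite negb_and. Qed.

Lemma psi_one00 : one 0 0 = 1.
Proof. by rewrite /psi_one !eqxx. Qed.

Lemma psi_mul1r A K M k m : psi_bounded A K M -> psi_mul A one K M 0 0 k m = A k m.
Proof.
move=> hA; pose N : int := `|k| + `|m| + `|K| + `|M| + 1.
rewrite (psi_mul_window (N := N) hA psi_one_bounded); try lia.
rewrite (@zsum_single _ _ _ _ 0); [|lia|move=> j _ j_neq0]; last first.
  apply: zsum_eq0 => a _; apply: zsum_eq0 => b _.
  have [/andP[/eqP -> _]|] := boolP ((k + j - a == 0) && (m + j - b == 0)).
    by rewrite commute_coef0r ?mulr0.
  by rewrite negb_and => /psi_one_eq0 ->; rewrite mulr0 mul0r.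
rewrite (@zsum_single _ _ _ _ k); [|lia|move=> a _ a_neq_k]; last first.
  by apply: zsum_eq0 => b _; rewrite psi_one_eq0 ?mulr0 ?mul0r //; lia.
rewrite (@zsum_single _ _ _ _ m); [|lia|move=> b _ b_neq_m]; last first.
  by rewrite psi_one_eq0 ?mulr0 ?mul0r //; lia.
by rewrite !addr0 !subrr psi_one00 commute_coef0 !mulr1.
Qed.

Lemma psi_mul1l B K M k m : psi_bounded B K M -> psi_mul one B 0 0 K M k m = B k m.
Proof.
move=> hB; pose N : int := `|k| + `|m| + `|K| + `|M| + 1.
rewrite (psi_mul_window (N := N) psi_one_bounded hB); try lia.
rewrite (@zsum_single _ _ _ _ 0); [|lia|move=> j _ j_neq0]; last first.
  apply: zsum_eq0 => a _; apply: zsum_eq0 => b _.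
  have [/andP[_ /eqP ->]|] := boolP ((a == 0) && (b == 0)).
    by rewrite commute_coef0l ?mulr0.
  by rewrite negb_and => /psi_one_eq0 ->; rewrite !mul0r.
rewrite (@zsum_single _ _ _ _ 0); [|lia|move=> a _ a_neq0]; last first.
  by apply: zsum_eq0 => b _; rewrite psi_one_eq0 ?a_neq0 ?mul0r.
rewrite (@zsum_single _ _ _ _ 0); [|lia|move=> b _ b_neq0]; last first.
  by rewrite psi_one_eq0 ?b_neq0 ?orbT ?mul0r.
by rewrite !addr0 psi_one00 commute_coef0 mulr1 mul1r.
Qed.

Lemma psi_boundedB A B K M :
  psi_bounded A K M -> psi_bounded B K M -> psi_bounded (fun x y => A x y - B x y) K M.
Proof. by move=> hA hB k m h; rewrite hA // hB // subrr. Qed.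

Definition agree_above E1 E2 (p q : int) : Prop :=
  forall p' q', p <= p' -> q <= q' -> (p' != p) || (q' != q) -> E1 p' q' = E2 p' q'.

Lemma psi_mul_cornerr D G K M K' M' p q :
  psi_bounded D K M -> psi_bounded G K' M' -> agree_above G (fun _ _ => 0) p q ->
  psi_mul D G K M K' M' (p + K) (q + M) = D K M * G p q.
Proof.
move=> hD hG hGpq; pose N : int := `|p| + `|q| + `|K| + `|M| + `|K'| + `|M'| + 1.
rewrite (psi_mul_window (N := N) hD hG); try lia.
have vanish a b j : 0 <= j -> [|| a != K, b != M | j != 0] ->
    D a b * G (p + K + j - a) (q + M + j - b) * commute_coef b (p + K + j - a) j = 0.
  move=> j_ge0 h; have [/andP[a_le b_le]|/(psi_bounded_eq0 hD) ->] := boolP ((a <= K) && (b <= M)).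
    by rewrite hGpq ?mulr0 ?mul0r //; lia.
  by rewrite !mul0r.
rewrite (@zsum_single _ _ _ _ 0); [|lia|move=> j j_range j_neq0]; last first.
  by apply: zsum_eq0 => a _; apply: zsum_eq0 => b _; rewrite vanish ?j_neq0 ?orbT //; lia.
rewrite (@zsum_single _ _ _ _ K); [|lia|move=> a _ a_neq]; last first.
  by apply: zsum_eq0 => b _; rewrite vanish ?a_neq.
rewrite (@zsum_single _ _ _ _ M); [|lia|move=> b _ b_neq]; last first.
  by rewrite vanish ?b_neq ?orbT.
by rewrite !addr0 !addrK commute_coef0 mulr1.
Qed.

Lemma psi_mul_cornerl D G K M K' M' p q :
  psi_bounded D K M -> psi_bounded G K' M' -> agree_above G (fun _ _ => 0) p q ->
  psi_mul G D K' M' K M (p + K) (q + M) = G p q * D K M.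
Proof.
move=> hD hG hGpq; pose N : int := `|p| + `|q| + `|K| + `|M| + `|K'| + `|M'| + 1.
rewrite (psi_mul_window (N := N) hG hD); try lia.
have vanish a b j : 0 <= j -> [|| a != p, b != q | j != 0] ->
    G a b * D (p + K + j - a) (q + M + j - b) * commute_coef b (p + K + j - a) j = 0.
  move=> j_ge0 h.
  have [/andP[a_le b_le]|/(psi_bounded_eq0 hD) ->] :=
    boolP ((p + K + j - a <= K) && (q + M + j - b <= M)).
    by rewrite hGpq ?mul0r //; lia.
  by rewrite mulr0 mul0r.
rewrite (@zsum_single _ _ _ _ 0); [|lia|move=> j j_range j_neq0]; last first.
  by apply: zsum_eq0 => a _; apply: zsum_eq0 => b _; rewrite vanish ?j_neq0 ?orbT //; lia.
rewrite (@zsum_single _ _ _ _ p); [|lia|move=> a _ a_neq]; last first.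
  by apply: zsum_eq0 => b _; rewrite vanish ?a_neq.
rewrite (@zsum_single _ _ _ _ q); [|lia|move=> b _ b_neq]; last first.
  by rewrite vanish ?b_neq ?orbT.
by rewrite !addr0 ![p + _]addrC ![q + _]addrC !addrK commute_coef0 mulr1.
Qed.

Lemma psi_mul_triangularr D E1 E2 K M K' M' p q :
  psi_bounded D K M -> psi_bounded E1 K' M' -> psi_bounded E2 K' M' -> agree_above E1 E2 p q ->
  psi_mul D E1 K M K' M' (p + K) (q + M) - D K M * E1 p q =
  psi_mul D E2 K M K' M' (p + K) (q + M) - D K M * E2 p q.
Proof.
move=> hD h1 h2 h12.
have vanish : agree_above (fun x y => E1 x y - E2 x y) (fun _ _ => 0) p q.
  by move=> p' q' *; rewrite h12 ?subrr.
have := psi_mul_cornerr hD (psi_boundedB h1 h2) vanish.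
by rewrite psi_mulBr => /eqP; rewrite subr_eq => /eqP ->; ring.
Qed.

Lemma psi_mul_triangularl D E1 E2 K M K' M' p q :
  psi_bounded D K M -> psi_bounded E1 K' M' -> psi_bounded E2 K' M' -> agree_above E1 E2 p q ->
  psi_mul E1 D K' M' K M (p + K) (q + M) - D K M * E1 p q =
  psi_mul E2 D K' M' K M (p + K) (q + M) - D K M * E2 p q.
Proof.
move=> hD h1 h2 h12.
have vanish : agree_above (fun x y => E1 x y - E2 x y) (fun _ _ => 0) p q.
  by move=> p' q' *; rewrite h12 ?subrr.
have := psi_mul_cornerl hD (psi_boundedB h1 h2) vanish.
by rewrite psi_mulBl => /eqP; rewrite subr_eq => /eqP ->; ring.
Qed.

End ProductLaws.

Section TriangularSystem.
Variable F : fieldType.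
Variables (K M : int) (c : F) (rhs : int -> int -> F).
Variable Phi : (int -> int -> F) -> int -> int -> F.
Hypothesis c_neq0 : c != 0.
Hypothesis Phi_triangular : forall E1 E2 p q,
  psi_bounded E1 K M -> psi_bounded E2 K M -> agree_above E1 E2 p q ->
  Phi E1 p q - c * E1 p q = Phi E2 p q - c * E2 p q.

Definition in_quadrant p q := (p <= K) && (q <= M).

Definition depth p q : nat := absz (K - p + (M - q)).

Definition solve_step (G : int -> int -> F) p q :=
  if in_quadrant p q then (rhs p q - (Phi G p q - c * G p q)) / c else 0.

Definition solve_iter n := iter n solve_step (fun _ _ => 0).

Lemma solve_iter_bounded n : psi_bounded (solve_iter n) K M.
Proof.
by case: n => [|n] p q h //=; rewrite /solve_step ifF //; apply/negbTE; rewrite /in_quadrant; lia.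
Qed.

Lemma solve_iter_out n p q : ~~ in_quadrant p q -> solve_iter n p q = 0.
Proof. by move=> h; apply: solve_iter_bounded; move: h; rewrite /in_quadrant; lia. Qed.

(* Points of the quadrant strictly above [(p, q)] have smaller depth. *)
Lemma solve_iter_stable d p q n n' : in_quadrant p q -> depth p q = d ->
  (d < n)%N -> (d < n')%N -> solve_iter n p q = solve_iter n' p q.
Proof.
elim/ltn_ind: d p q n n' => d IH p q [|n] [|n'] // pq_in pq_d d_lt d_lt'.
rewrite /solve_iter !iterS -!/(solve_iter _) /solve_step pq_in.
rewrite (Phi_triangular (solve_iter_bounded n) (solve_iter_bounded n')) //.
move=> p' q' le_pp' le_qq' neq.
have [pq'_in|pq'_out] := boolP (in_quadrant p' q'); last by rewrite !solve_iter_out.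
by apply: (IH (depth p' q')) => //; move: pq'_in d_lt d_lt'; rewrite -pq_d /depth /in_quadrant; lia.
Qed.

Definition triangular_solution p q := solve_iter (depth p q).+1 p q.

Lemma triangular_solution_bounded : psi_bounded triangular_solution K M.
Proof. by move=> p q h; rewrite /triangular_solution solve_iter_bounded. Qed.

Lemma triangular_solutionE p q n : in_quadrant p q -> (depth p q < n)%N ->
  triangular_solution p q = solve_iter n p q.
Proof. by move=> pq_in lt_n; apply: (solve_iter_stable (d := depth p q)). Qed.

Lemma triangular_solution_solves p q : in_quadrant p q -> Phi triangular_solution p q = rhs p q.
Proof.
move=> pq_in.
have agree : agree_above triangular_solution (solve_iter (depth p q)) p q.
  move=> p' q' le_pp' le_qq' neq; have [pq'_in|pq'_out] := boolP (in_quadrant p' q').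
    by apply: triangular_solutionE => //; move: pq_in pq'_in; rewrite /depth /in_quadrant; lia.
  rewrite solve_iter_out // triangular_solution_bounded //.
  by move: pq'_out; rewrite /in_quadrant; lia.
have sol_pq : triangular_solution p q = solve_step (solve_iter (depth p q)) p q.
  by rewrite /triangular_solution /solve_iter iterS.
move: (Phi_triangular triangular_solution_bounded (solve_iter_bounded _) agree).
rewrite sol_pq /solve_step pq_in => /eqP; rewrite subr_eq => /eqP ->.
by field.
Qed.

End TriangularSystem.

Section ProductAssociativity.
Variable F : fieldType.
Hypothesis F_char0 : has_pchar0 F.
Implicit Types A B C : int -> int -> F.

Section Expansion.
Variables (A B C : int -> int -> F) (K1 M1 K2 M2 K3 M3 : int).
Hypotheses (hA : psi_bounded A K1 M1) (hB : psi_bounded B K2 M2) (hC : psi_bounded C K3 M3).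
Variables (k m N : int).
Hypothesis N_large : `|k| + `|m| + `|K1| + `|K2| + `|K3| + `|M1| + `|M2| + `|M3| < N.

Lemma psi_mul_expand3l :
  psi_mul (psi_mul A B K1 M1 K2 M2) C (K1 + K2) (M1 + M2) K3 M3 k m =
  zsum 0 N (fun i => zsum (-N) N (fun e => zsum (-N) N (fun f =>
  zsum 0 N (fun j => zsum (-N) N (fun a => zsum (-N) N (fun b =>
    A a b * B (k + i - e + j - a) (m + i - f + j - b) * commute_coef b (k + i - e + j - a) j
    * C e f * commute_coef (m + i - f) e i)))))).
Proof.
rewrite (psi_mul_windowr (N := N) (@psi_mul_bounded _ A B K1 M1 K2 M2) hC); try lia.
apply: eq_zsum_in => i i_range; apply: eq_zsum_in => e e_range; apply: eq_zsum_in => f f_range.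
have [/andP[e_le f_le]|/(psi_bounded_eq0 hC) ->] := boolP ((e <= K3) && (f <= M3)); last first.
  by rewrite mulr0 mul0r; symmetry; do 3!(apply: zsum_eq0 => ? _); rewrite mulr0 mul0r.
rewrite (psi_mul_window (N := N) hA hB); try lia.
rewrite !mulr_zsuml; apply: eq_zsum => j; rewrite !mulr_zsuml; apply: eq_zsum => a.
by rewrite !mulr_zsuml.
Qed.

Lemma psi_mul_expand3r :
  psi_mul A (psi_mul B C K2 M2 K3 M3) K1 M1 (K2 + K3) (M2 + M3) k m =
  zsum 0 N (fun i => zsum (-N) N (fun a => zsum (-N) N (fun b =>
  zsum 0 N (fun j => zsum (-N) N (fun e => zsum (-N) N (fun f =>
    A a b * (B (k + i - a + j - e) (m + i - b + j - f) * C e f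
             * commute_coef (m + i - b + j - f) e j) * commute_coef b (k + i - a) i)))))).
Proof.
rewrite (psi_mul_window (N := N) hA (@psi_mul_bounded _ B C K2 M2 K3 M3)); try lia.
apply: eq_zsum_in => i i_range; apply: eq_zsum_in => a a_range; apply: eq_zsum_in => b b_range.
have [/andP[a_le b_le]|/(psi_bounded_eq0 hA) ->] := boolP ((a <= K1) && (b <= M1)); last first.
  by rewrite !mul0r; symmetry; do 3!(apply: zsum_eq0 => ? _); rewrite !mul0r.
rewrite (psi_mul_windowr (N := N) hB hC); try lia.
rewrite mulr_zsumr mulr_zsuml; apply: eq_zsum => j.
rewrite mulr_zsumr mulr_zsuml; apply: eq_zsum => e.
by rewrite mulr_zsumr mulr_zsuml.
Qed.

(* Both sides are sums over [i + j = s] of [G s] times weights, and for each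
   [s] the weights agree by [commute_coef_assoc]. *)
Lemma psi_mul_assoc_inner a b e f :
  zsum 0 N (fun i => zsum 0 N (fun j =>
    A a b * B (k + i - e + j - a) (m + i - f + j - b) * commute_coef b (k + i - e + j - a) j
    * C e f * commute_coef (m + i - f) e i)) =
  zsum 0 N (fun i => zsum 0 N (fun j =>
    A a b * (B (k + i - a + j - e) (m + i - b + j - f) * C e f
             * commute_coef (m + i - b + j - f) e j) * commute_coef b (k + i - a) i)).
Proof.
pose G s := A a b * B (k + s - a - e) (m + s - b - f) * C e f.
have G0 s : N < s -> G s = 0.
  move=> s_gt; rewrite /G.
  have [/andP[a_le _]|/(psi_bounded_eq0 hA) ->] := boolP ((a <= K1) && (b <= M1));
    last by rewrite !mul0r.
  have [/andP[e_le _]|/(psi_bounded_eq0 hC) ->] := boolP ((e <= K3) && (f <= M3));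
    last by rewrite mulr0.
  by rewrite (psi_bounded_eq0 hB) ?mulr0 ?mul0r //; lia.
transitivity (zsum 0 N (fun i => zsum 0 N (fun j => G (i + j) *
    (commute_coef b (k + (i + j) - a - e) j * commute_coef (m + i - f) e i)))).
  apply: eq_zsum => i; apply: eq_zsum => j; rewrite /G.
  have -> : k + i - e + j - a = k + (i + j) - a - e by ring.
  have -> : m + i - f + j - b = m + (i + j) - b - f by ring.
  by ring.
transitivity (zsum 0 N (fun i => zsum 0 N (fun j => G (i + j) *
    (commute_coef b (k + i - a) i * commute_coef (m + (i + j) - b - f) e j)))); last first.
  apply: eq_zsum => i; apply: eq_zsum => j; rewrite /G.
  have -> : k + i - a + j - e = k + (i + j) - a - e by ring.
  have -> : m + i - b + j - f = m + (i + j) - b - f by ring.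
  by ring.
rewrite !zsum_antidiagonal //; try lia.
apply: eq_zsum_in => s /andP[s_ge0 _]; congr (_ * _).
have [n ->] : exists n : nat, s = n by exists (absz s); lia.
transitivity (@zsum F 0 n (fun i => commute_coef b (k + n - a - e) (n%:Z - i)
    * commute_coef (b + (m + n - b - f) - (n%:Z - i)) e i)).
  by apply: eq_zsum => i; congr (commute_coef _ _ _ * commute_coef _ _ _); ring.
rewrite commute_coef_assoc //; apply: eq_zsum => i.
by congr (commute_coef _ _ _ * commute_coef _ _ _); ring.
Qed.

End Expansion.

Lemma psi_mulA A B C K1 M1 K2 M2 K3 M3 k m :
  psi_bounded A K1 M1 -> psi_bounded B K2 M2 -> psi_bounded C K3 M3 ->
  psi_mul (psi_mul A B K1 M1 K2 M2) C (K1 + K2) (M1 + M2) K3 M3 k m =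
  psi_mul A (psi_mul B C K2 M2 K3 M3) K1 M1 (K2 + K3) (M2 + M3) k m.
Proof.
move=> hA hB hC.
pose N : int := `|k| + `|m| + `|K1| + `|K2| + `|K3| + `|M1| + `|M2| + `|M3| + 1.
have N_large : `|k| + `|m| + `|K1| + `|K2| + `|K3| + `|M1| + `|M2| + `|M3| < N by lia.
rewrite (psi_mul_expand3l hA hB hC N_large) (psi_mul_expand3r hA hB hC N_large).
rewrite exchange_zsum6l exchange_zsum6r.
apply: eq_zsum => a; apply: eq_zsum => b; apply: eq_zsum => e; apply: eq_zsum => f.
exact: (psi_mul_assoc_inner hA hB hC N_large).
Qed.

End ProductAssociativity.

Section Inverse.
Variable F : fieldType.
Hypothesis F_char0 : has_pchar0 F.
Variables (D : int -> int -> F) (K M : int).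
Hypotheses (hD : psi_bounded D K M) (DKM_neq0 : D K M != 0).
Local Notation one := (@psi_one F).

Definition shifted_one p q := one (p + K) (q + M).

Definition right_inverse := triangular_solution (-K) (-M) (D K M) shifted_one
  (fun E p q => psi_mul D E K M (-K) (-M) (p + K) (q + M)).

Definition left_inverse := triangular_solution (-K) (-M) (D K M) shifted_one
  (fun E p q => psi_mul E D (-K) (-M) K M (p + K) (q + M)).

Lemma right_inverse_bounded : psi_bounded right_inverse (-K) (-M).
Proof. exact: triangular_solution_bounded. Qed.

Lemma left_inverse_bounded : psi_bounded left_inverse (-K) (-M).
Proof. exact: triangular_solution_bounded. Qed.

Lemma psi_mul_right_inverse k m : psi_mul D right_inverse K M (-K) (-M) k m = one k m.
Proof.
have [km_in|km_out] := boolP (in_quadrant (-K) (-M) (k - K) (m - M)); last first.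
  by rewrite psi_mul_bounded ?psi_one_eq0 //; move: km_out; rewrite /in_quadrant; lia.
rewrite -[k](subrK K) -[m](subrK M).
pose Phi E p q := psi_mul D E K M (-K) (-M) (p + K) (q + M).
change (Phi right_inverse (k - K) (m - M) = shifted_one (k - K) (m - M)).
apply: (triangular_solution_solves _ DKM_neq0) km_in => E1 E2 p q.
exact: psi_mul_triangularr.
Qed.

Lemma psi_mul_left_inverse k m : psi_mul left_inverse D (-K) (-M) K M k m = one k m.
Proof.
have [km_in|km_out] := boolP (in_quadrant (-K) (-M) (k - K) (m - M)); last first.
  by rewrite psi_mul_bounded ?psi_one_eq0 //; move: km_out; rewrite /in_quadrant; lia.
rewrite -[k](subrK K) -[m](subrK M).
pose Phi E p q := psi_mul E D (-K) (-M) K M (p + K) (q + M).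
change (Phi left_inverse (k - K) (m - M) = shifted_one (k - K) (m - M)).
apply: (triangular_solution_solves _ DKM_neq0) km_in => E1 E2 p q.
exact: psi_mul_triangularl.
Qed.

Lemma left_inverse_eq_right k m : left_inverse k m = right_inverse k m.
Proof.
rewrite -(psi_mul1r k m left_inverse_bounded).
transitivity (psi_mul left_inverse (psi_mul D right_inverse K M (-K) (-M))
                (-K) (-M) (K + -K) (M + -M) k m).
  by rewrite !addrN; apply: eq_psi_mul => // a b; rewrite psi_mul_right_inverse.
rewrite -(psi_mulA F_char0 _ _ left_inverse_bounded hD right_inverse_bounded).
rewrite -(psi_mul1l k m right_inverse_bounded) !addNr.
by apply: eq_psi_mul => // a b; rewrite psi_mul_left_inverse.
Qed.

Lemma psi_invertible_lead : psi_invertible D K M.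
Proof.
exists right_inverse, (-K), (-M); split; first exact: right_inverse_bounded.
split=> k m; first exact: psi_mul_right_inverse.
by rewrite -(psi_mul_left_inverse k m); apply: eq_psi_mul => // a b; rewrite left_inverse_eq_right.
Qed.

End Inverse.

Local Open Scope complex_scope.

Theorem lemma2p1 (R : realType) (C : int -> int -> R[i]) (K M : int) :
  psi_bounded C K M -> C K M != 0 -> psi_invertible C K M.
Proof. exact: (psi_invertible_lead (pchar_num R[i])). Qed.
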